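(* Let $X\in\mathrm{Alex}^n(0)$ and let $f:X\to\mathbb{R}$ be a Lipschitz continuous affine function with optimal Lipschitz constant $\|f\|$. If there is a unit-speed line $\gamma:\mathbb{R}\to X$ with $\infty>(f\circ\gamma)'=\|f\|>0$, then there is a metric space $Z$ and an isometry $X\cong Z\times\mathbb{R}$ under which $f(z,t)=\|f\|\,t$.
   Context: $\mathrm{Alex}^n(0)$ denotes the class of complete geodesic metric spaces of Hausdorff dimension $n<\infty$ with nonnegative curvature in the sense of Alexandrov. A function is affine if its composition with every geodesic is affine. A unit-speed line is a curve $\gamma:\mathbb{R}\to X$ with $d(\gamma(s),\gamma(t))=|s-t|$ for all $s,t$. *)

From Stdlib Require Import Reals ClassicalDescription.
Open Scope R_scope.

Definition is_metric {X : Type} (d : X -> X -> R) : Prop :=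
  (forall x y, 0 <= d x y) /\
  (forall x y, d x y = 0 <-> x = y) /\
  (forall x y, d x y = d y x) /\
  (forall x y z, d x z <= d x y + d y z).

Definition cauchy_seq {X : Type} (d : X -> X -> R) (u : nat -> X) : Prop :=
  forall eps, 0 < eps -> exists N, forall m k, (N <= m)%nat -> (N <= k)%nat ->
    d (u m) (u k) < eps.

Definition converges_to {X : Type} (d : X -> X -> R) (u : nat -> X) (l : X) : Prop :=
  forall eps, 0 < eps -> exists N, forall m, (N <= m)%nat -> d (u m) l < eps.

Definition complete {X : Type} (d : X -> X -> R) : Prop :=
  forall u, cauchy_seq d u -> exists l, converges_to d u l.

Definition unit_geodesic_on {X : Type} (d : X -> X -> R) (g : R -> X) (a b : R) : Prop :=
  a <= b /\ forall s t, a <= s <= b -> a <= t <= b -> d (g s) (g t) = Rabs (s - t).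

Definition geodesic_space {X : Type} (d : X -> X -> R) : Prop :=
  forall x y, exists g : R -> X,
    g 0 = x /\ g (d x y) = y /\ unit_geodesic_on d g 0 (d x y).

(** Nonnegative curvature in the sense of Alexandrov (triangle comparison with
    the Euclidean plane, point-on-side form): for every geodesic [g] from [y]
    to [z] of length [L = d y z] and every [x], [t] in [0,L],
    L d(x,g t)^2 >= (L-t) d(x,y)^2 + t d(x,z)^2 - t (L-t) L. *)
Definition nonneg_curv {X : Type} (d : X -> X -> R) : Prop :=
  forall (x y z : X) (g : R -> X),
    g 0 = y -> g (d y z) = z -> unit_geodesic_on d g 0 (d y z) ->
    forall t, 0 <= t <= d y z ->
      (d y z - t) * (d x y)^2 + t * (d x z)^2 - t * (d y z - t) * d y z
        <= d y z * (d x (g t))^2.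

(** r^s with the conventions 0^0 = 1 and 0^s = 0 for s > 0. *)
Definition rpow (r s : R) : R :=
  if Req_EM_T r 0 then (if Req_EM_T s 0 then 1 else 0) else Rpower r s.

(** Contribution diam(A)^s of a cover element [A], using an upper bound [r] of
    its diameter; the empty set contributes 0. *)
Definition cover_cost {X : Type} (A : X -> Prop) (r s : R) : R :=
  if excluded_middle_informative (exists x, A x) then rpow r s else 0.

Definition hausdorff_null {X : Type} (d : X -> X -> R) (s : R) : Prop :=
  forall delta eps, 0 < delta -> 0 < eps ->
    exists (U : nat -> X -> Prop) (r : nat -> R),
      (forall x, exists i, U i x) /\
      (forall i, 0 <= r i <= delta) /\
      (forall i x y, U i x -> U i y -> d x y <= r i) /\
      exists b, b < eps /\
        forall N, sum_f_R0 (fun i => cover_cost (U i) (r i) s) N <= b.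

Definition is_glb (E : R -> Prop) (m : R) : Prop :=
  (forall x, E x -> m <= x) /\ (forall m', (forall x, E x -> m' <= x) -> m' <= m).

Definition hausdorff_dim {X : Type} (d : X -> X -> R) (n : R) : Prop :=
  is_glb (fun s => 0 <= s /\ hausdorff_null d s) n.

Definition Alex_nonneg {X : Type} (d : X -> X -> R) (n : nat) : Prop :=
  is_metric d /\ complete d /\ geodesic_space d /\ nonneg_curv d /\
  hausdorff_dim d (INR n).

Definition affine_fun {X : Type} (d : X -> X -> R) (f : X -> R) : Prop :=
  forall (g : R -> X) a b, unit_geodesic_on d g a b ->
    exists al be, forall t, a <= t <= b -> f (g t) = al * t + be.

Definition lipschitz_with {X : Type} (d : X -> X -> R) (f : X -> R) (K : R) : Prop :=
  forall x y, Rabs (f x - f y) <= K * d x y.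

Definition opt_lipschitz {X : Type} (d : X -> X -> R) (f : X -> R) (L : R) : Prop :=
  is_glb (fun K => 0 <= K /\ lipschitz_with d f K) L.

Definition unit_line {X : Type} (d : X -> X -> R) (g : R -> X) : Prop :=
  forall s t, d (g s) (g t) = Rabs (s - t).

Definition prod_dist {Z : Type} (dZ : Z -> Z -> R) (p q : Z * R) : R :=
  sqrt ((dZ (fst p) (fst q))^2 + (snd p - snd q)^2).

(* Put h = f / L.  It is 1-Lipschitz and, after a shift of gamma, h (gamma t) = t.
   Comparison in the triangles gamma(-T), gamma(0), gamma(T) shows that d(x, gamma(+-T))
   exceeds T -+ h(x) by O(1/T), so from every x there are arbitrarily high and arbitrarily
   low points almost realising the Lipschitz bound.  Points at distance s from x on
   geodesics towards high such points form a Cauchy family; by completeness they converge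
   to a point p with d(x,p) = s = h(p) - h(x), and comparison shows that p is unique.
   These points assemble into a unit-speed line through x along which h grows at unit
   rate, and comparison along such lines yields the Pythagorean identity
   d(y, l_x(s))^2 = d(x,y)^2 + 2 s (h(x) - h(y)) + s^2.  Sliding along these lines onto
   h^-1(0) is then the isometry X = h^-1(0) x R. *)

From Stdlib Require Import Reals Lra ClassicalEpsilon ProofIrrelevance.
Open Scope R_scope.

Lemma Rabs_minus_of_le a b : a <= b -> Rabs (a - b) = b - a.
Proof. intros; rewrite Rabs_minus_sym, Rabs_pos_eq; lra. Qed.

Lemma Rabs_bounds a : - Rabs a <= a <= Rabs a.
Proof. unfold Rabs; destruct Rcase_abs; lra. Qed.

Lemma le_of_large_multiples a b c T0 : (forall T, T0 <= T -> T * a <= T * b + c) -> a <= b.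
Proof.
  intros H; destruct (Rle_dec a b) as [|Hab]; [assumption | exfalso].
  set (T := Rmax T0 (Rmax 1 (Rabs c / (a - b) + 1))).
  assert (T0 <= T) by apply Rmax_l.
  assert (Rabs c / (a - b) + 1 <= T) by (eapply Rle_trans; [apply Rmax_r | apply Rmax_r]).
  assert ((a - b) * (Rabs c / (a - b)) = Rabs c) by (field; lra).
  pose proof (Rabs_bounds c); specialize (H T ltac:(assumption)); nra.
Qed.

Lemma inv_INR_succ_eventually_le e :
  0 < e -> exists N, forall k, (N <= k)%nat -> / (INR k + 1) <= e.
Proof.
  intros He; destruct (INR_archimed e 1 He) as [N HN]; exists N; intros k Hk.
  apply le_INR in Hk; pose proof (pos_INR N).
  apply (Rmult_le_reg_l (INR k + 1)); [lra|]; rewrite Rinv_r by lra; nra.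
Qed.

Lemma constant_derivative_affine (k : R -> R) c :
  (forall t, derivable_pt_lim k t c) -> forall t, k t = c * t + k 0.
Proof.
  intros Hk.
  assert (Hq : forall t, derivable_pt_lim (fun s => k s - c * s) t 0).
  { intro t; replace 0 with (c - c * 1) by ring.
    apply derivable_pt_lim_minus; [apply Hk|].
    apply derivable_pt_lim_scal, derivable_pt_lim_id. }
  pose proof (null_derivative_1 _ (fun t => exist _ 0 (Hq t)) (fun t => eq_refl)) as Hconst.
  intro t; specialize (Hconst t 0); cbv beta in Hconst; lra.
Qed.

Section Metric.
Context {X : Type} (d : X -> X -> R) (HM : is_metric d).

Lemma dist_ge0 x y : 0 <= d x y.
Proof. apply HM. Qed.

Lemma dist_eq0 x y : d x y = 0 -> x = y.
Proof. apply HM. Qed.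

Lemma dist_refl x : d x x = 0.
Proof. apply HM; reflexivity. Qed.

Lemma dist_sym x y : d x y = d y x.
Proof. apply HM. Qed.

Lemma dist_triangle x y z : d x z <= d x y + d y z.
Proof. apply HM. Qed.

Lemma one_lipschitz_opp (h : X -> R) :
  (forall x y, h x - h y <= d x y) -> forall x y, - h x - - h y <= d x y.
Proof. intros Hh x y; rewrite dist_sym; specialize (Hh y x); lra. Qed.

Lemma unit_line_reverse (l : R -> X) : unit_line d l -> unit_line d (fun t => l (- t)).
Proof.
  intros Hl s t; rewrite Hl, <- Rabs_Ropp; f_equal; ring.
Qed.

Lemma unit_line_shift (l : R -> X) c : unit_line d l -> unit_line d (fun t => l (c + t)).
Proof.
  intros Hl s t; rewrite Hl; f_equal; ring.
Qed.

Lemma unit_line_dist (l : R -> X) s t : unit_line d l -> s <= t -> d (l s) (l t) = t - s.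
Proof. intros Hl Hst; rewrite Hl; now apply Rabs_minus_of_le. Qed.

Lemma unit_geodesic_dist_ends (g : R -> X) x y L s :
  g 0 = x -> g L = y -> unit_geodesic_on d g 0 L -> 0 <= s <= L ->
  d x (g s) = s /\ d (g s) y = L - s.
Proof.
  intros <- <- [_ Hg] Hs; rewrite !Hg by lra.
  now rewrite !Rabs_minus_of_le by lra; split; ring.
Qed.

Lemma converges_dist_const (u : nat -> X) l x s :
  converges_to d u l -> (forall k, d x (u k) = s) -> d x l = s.
Proof.
  intros Hu Hs; apply Rle_antisym; apply Rle_plus_epsilon; intros eps Heps;
    destruct (Hu eps Heps) as [N HN]; specialize (HN N (le_n N));
    pose proof (dist_triangle x (u N) l); pose proof (dist_triangle x l (u N));
    rewrite (dist_sym l (u N)), Hs in *; lra.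
Qed.

Lemma is_metric_sig (P : X -> Prop) :
  is_metric (fun z w : {x | P x} => d (proj1_sig z) (proj1_sig w)).
Proof.
  split; [|split; [|split]]; intros.
  - apply dist_ge0.
  - split; [|intros ->; apply dist_refl].
    destruct x as [x Px], y as [y Py]; simpl; intros ->%dist_eq0.
    f_equal; apply proof_irrelevance.
  - apply dist_sym.
  - apply dist_triangle.
Qed.

Lemma opt_lipschitz_lipschitz f L :
  opt_lipschitz d f L -> lipschitz_with d f L.
Proof.
  intros (_ & Hglb) x y.
  destruct (Req_dec (d x y) 0) as [->%dist_eq0 | Hxy].
  { rewrite Rminus_diag, Rabs_R0, dist_refl, Rmult_0_r; apply Rle_refl. }
  pose proof (dist_ge0 x y).
  assert (Hratio : Rabs (f x - f y) / d x y <= L).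
  { apply Hglb; intros K (_ & HK); specialize (HK x y).
    apply (Rmult_le_reg_r (d x y)); [lra|].
    unfold Rdiv; rewrite Rmult_assoc, Rinv_l by lra; lra. }
  apply (Rmult_le_compat_r (d x y)) in Hratio; [|lra].
  unfold Rdiv in Hratio; rewrite Rmult_assoc, Rinv_l, Rmult_1_r in Hratio by lra; exact Hratio.
Qed.

End Metric.

Section Comparison.
Context {X : Type} (d : X -> X -> R) (HM : is_metric d) (HG : geodesic_space d)
  (HN : nonneg_curv d).

Lemma geodesic_point x y s : 0 <= s <= d x y -> exists p, d x p = s /\ d p y = d x y - s.
Proof.
  intros Hs; destruct (HG x y) as (g & g0 & g1 & Hg).
  exists (g s); exact (unit_geodesic_dist_ends d g x y _ s g0 g1 Hg Hs).
Qed.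

Lemma geodesic_through x y z :
  d x y + d y z = d x z ->
  exists gam, gam 0 = x /\ gam (d x y) = y /\ gam (d x z) = z /\
    unit_geodesic_on d gam 0 (d x z).
Proof.
  intros Hy; set (a := d x y) in *; set (b := d y z) in *.
  assert (0 <= a) by apply (dist_ge0 d HM).
  assert (0 <= b) by apply (dist_ge0 d HM).
  destruct (HG x y) as (g1 & g10 & g1a & Hg1); fold a in g1a, Hg1.
  destruct (HG y z) as (g2 & g20 & g2b & Hg2); fold b in g2b, Hg2.
  assert (Hmix : forall s u, 0 <= s <= a -> 0 <= u <= b -> d (g1 s) (g2 u) = a - s + u).
  { intros s u Hs Hu.
    destruct (unit_geodesic_dist_ends d g1 x y a s g10 g1a Hg1 Hs).
    destruct (unit_geodesic_dist_ends d g2 y z b u g20 g2b Hg2 Hu).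
    pose proof (dist_triangle d HM (g1 s) y (g2 u)).
    pose proof (dist_triangle d HM x (g1 s) z).
    pose proof (dist_triangle d HM (g1 s) (g2 u) z).
    lra. }
  exists (fun t => if Rle_dec t a then g1 t else g2 (t - a)).
  split; [|split; [|split; [|split]]].
  - destruct (Rle_dec 0 a); [exact g10 | lra].
  - destruct (Rle_dec a a); [exact g1a | lra].
  - destruct (Rle_dec (d x z) a).
    + replace (d x z) with a by lra; rewrite g1a; apply (dist_eq0 d HM); fold b; lra.
    + replace (d x z - a) with b by lra; exact g2b.
  - lra.
  - intros s t Hs Ht.
    destruct (Rle_dec s a), (Rle_dec t a).
    + apply (proj2 Hg1); lra.
    + rewrite Hmix by lra; rewrite Rabs_minus_of_le; lra.
    + rewrite (dist_sym d HM), Hmix, Rabs_minus_sym, Rabs_minus_of_le; lra.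
    + rewrite (proj2 Hg2) by lra; f_equal; ring.
Qed.

Lemma comparison_between x y z v :
  d x y + d y z = d x z ->
  d y z * (d v x)^2 + d x y * (d v z)^2 - d x y * d y z * d x z <= d x z * (d v y)^2.
Proof.
  intros Hy; destruct (geodesic_through x y z Hy) as (gam & g0 & gy & gz & Hgam).
  pose proof (HN v x z gam g0 gz Hgam (d x y)) as K.
  rewrite gy in K; replace (d x z - d x y) with (d y z) in K by lra.
  apply K; pose proof (dist_ge0 d HM x y); pose proof (dist_ge0 d HM y z); lra.
Qed.

Lemma comparison_near_end x y z v s eta eps :
  d x y + d y z = d x z -> d y z = s -> 0 <= eta -> d v y <= s + eta ->
  0 <= d x z - eps <= d v x ->
  (d x z - s) * (d v z)^2 <= d x z * (2 * s * eta + eta^2 + 2 * s * eps).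
Proof.
  intros Hy Hs Heta Hvy Hvx; pose proof (comparison_between x y z v Hy) as K.
  rewrite Hs in K; replace (d x y) with (d x z - s) in K by lra.
  assert (0 <= s) by (rewrite <- Hs; apply (dist_ge0 d HM)).
  pose proof (dist_ge0 d HM v y); pose proof (dist_ge0 d HM x z).
  assert ((d x z - eps)^2 <= (d v x)^2) by (apply pow_incr; lra).
  assert ((d v y)^2 <= (s + eta)^2) by (apply pow_incr; lra).
  assert (s * (d x z - eps)^2 <= s * (d v x)^2) by (apply Rmult_le_compat_l; lra).
  assert (d x z * (d v y)^2 <= d x z * (s + eta)^2) by (apply Rmult_le_compat_l; lra).
  assert (0 <= s * eps^2) by (apply Rmult_le_pos; [lra | apply pow2_ge_0]).
  nra.
Qed.

End Comparison.

Definition gradient_line {X : Type} (d : X -> X -> R) (h : X -> R) (x : X) (l : R -> X) :=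
  l 0 = x /\ unit_line d l /\ forall t, h (l t) = h x + t.

Lemma gradient_line_reverse {X : Type} (d : X -> X -> R) h x l :
  gradient_line d h x l -> gradient_line d (fun y => - h y) x (fun t => l (- t)).
Proof.
  intros (l0 & Hl & Hhl); split; [|split].
  - now rewrite Ropp_0.
  - now apply unit_line_reverse.
  - intros t; rewrite Hhl; ring.
Qed.

Section Pythagoras.
Context {X : Type} (d : X -> X -> R) (HM : is_metric d) (HG : geodesic_space d)
  (HN : nonneg_curv d) (h : X -> R) (Hh : forall x y, h x - h y <= d x y).

Lemma pythagoras_nonneg x y l s :
  gradient_line d h x l -> 0 <= s ->
  (d y (l s))^2 = (d x y)^2 + 2 * s * (h x - h y) + s^2.
Proof.
  intros (l0 & Hl & Hhl) Hs.
  set (k := h x - h y); set (D := d x y); set (Y := d y (l s)).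
  assert (k <= D) by apply Hh.
  assert (- k <= D) by (unfold k, D; rewrite (dist_sym d HM); specialize (Hh y x); lra).
  assert (k^2 <= D^2) by nra.
  pose proof (Rabs_bounds k).
  apply Rle_antisym.
  - apply (le_of_large_multiples _ _ (s * (D^2 - k^2)) (Rabs k + 1)); intros T HT.
    pose proof (comparison_between d HM HG HN (l (- T)) (l 0) (l s) y) as K.
    rewrite !(unit_line_dist d l) in K by (auto; lra); rewrite l0 in K.
    rewrite (dist_sym d HM y x) in K; fold D Y in K.
    assert (T - k <= d y (l (- T))) by (specialize (Hh y (l (- T))); rewrite Hhl in Hh; unfold k; lra).
    assert ((T - k)^2 <= (d y (l (- T)))^2) by (apply pow_incr; lra).
    assert (s * (T - k)^2 <= s * (d y (l (- T)))^2) by (apply Rmult_le_compat_l; lra).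
    specialize (K ltac:(lra)); nra.
  - apply (le_of_large_multiples _ _ (s * (D^2 - k^2)) (s + Rabs k + 1)); intros T HT.
    pose proof (comparison_between d HM HG HN (l 0) (l s) (l T) y) as K.
    rewrite !(unit_line_dist d l) in K by (auto; lra); rewrite l0 in K.
    rewrite (dist_sym d HM y x) in K; fold D Y in K.
    assert (k + T <= d y (l T)) by (specialize (Hh (l T) y); rewrite Hhl, (dist_sym d HM) in Hh; unfold k; lra).
    assert ((k + T)^2 <= (d y (l T))^2) by (apply pow_incr; lra).
    assert (s * (k + T)^2 <= s * (d y (l T))^2) by (apply Rmult_le_compat_l; lra).
    specialize (K ltac:(lra)); nra.
Qed.

End Pythagoras.

Definition asymptotically_calibrated {X : Type} (d : X -> X -> R) (h : X -> R) :=
  forall x c eta, 0 < eta -> exists y, c <= h y - h x /\ d x y <= h y - h x + eta.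

Definition bicalibrated {X : Type} (d : X -> X -> R) (h : X -> R) :=
  asymptotically_calibrated d h /\ asymptotically_calibrated d (fun x => - h x).

Lemma bicalibrated_opp {X : Type} (d : X -> X -> R) h :
  bicalibrated d h -> bicalibrated d (fun x => - h x).
Proof.
  intros [Hup Hdown]; split; [exact Hdown|].
  intros x c eta Heta; destruct (Hup x c eta Heta) as (y & Hy); exists y.
  now rewrite !Ropp_involutive.
Qed.

Section LineCalibration.
Context {X : Type} (d : X -> X -> R) (HM : is_metric d) (HG : geodesic_space d)
  (HN : nonneg_curv d) (h : X -> R) (Hh : forall x y, h x - h y <= d x y)
  (g : R -> X) (Hg : unit_line d g) (Hhg : forall t, h (g t) = t).

Lemma line_excess_bound x T :
  0 < T -> Rabs (h x) <= T ->
  (T - h x) * (d x (g T) - (T - h x)) <= (d x (g 0))^2.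
Proof.
  intros HT Hx; pose proof (Rabs_bounds (h x)).
  pose proof (comparison_between d HM HG HN (g (- T)) (g 0) (g T) x) as K.
  rewrite !(unit_line_dist d g) in K by (auto; lra).
  assert (T + h x <= d x (g (- T))) by (specialize (Hh x (g (- T))); rewrite Hhg in Hh; lra).
  assert (T - h x <= d x (g T)) by (specialize (Hh (g T) x); rewrite Hhg, (dist_sym d HM) in Hh; lra).
  assert ((T + h x)^2 <= (d x (g (- T)))^2) by (apply pow_incr; lra).
  specialize (K ltac:(lra)).
  replace (0 - - T) with T in K by ring; replace (T - 0) with T in K by ring.
  replace (T - - T) with (2 * T) in K by ring.
  assert (T * (T + h x)^2 <= T * (d x (g (- T)))^2) by (apply Rmult_le_compat_l; lra).
  assert (0 <= T * (h x)^2) by (apply Rmult_le_pos; [lra | apply pow2_ge_0]).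
  assert (0 <= T * (d x (g T) - (T - h x))^2) by (apply Rmult_le_pos; [lra | apply pow2_ge_0]).
  apply (Rmult_le_reg_l T); [lra|]; nra.
Qed.

Lemma line_asymptotically_calibrated : asymptotically_calibrated d h.
Proof.
  intros x c eta Heta.
  set (D := d x (g 0)); set (q := D^2 / eta).
  assert (q * eta = D^2) by (unfold q; field; lra).
  assert (0 <= q) by (unfold q; apply Rmult_le_pos; [apply pow2_ge_0 | left; apply Rinv_0_lt_compat; lra]).
  set (T := Rabs (h x) + Rabs c + q + 1).
  pose proof (Rabs_bounds (h x)); pose proof (Rabs_bounds c).
  pose proof (line_excess_bound x T ltac:(unfold T; lra) ltac:(unfold T; lra)) as K.
  fold D in K.
  exists (g T); rewrite Hhg; split; [unfold T; lra|].
  destruct (Rle_dec (d x (g T)) (T - h x + eta)) as [|Hfar]; [assumption | exfalso].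
  assert ((T - h x) * eta < (T - h x) * (d x (g T) - (T - h x))) by (apply Rmult_lt_compat_l; unfold T in *; lra).
  assert (q * eta <= (T - h x) * eta) by (apply Rmult_le_compat_r; unfold T; lra).
  lra.
Qed.

End LineCalibration.

Lemma line_bicalibrated {X : Type} (d : X -> X -> R) (HM : is_metric d)
  (HG : geodesic_space d) (HN : nonneg_curv d) h g :
  (forall x y, h x - h y <= d x y) -> unit_line d g -> (forall t, h (g t) = t) ->
  bicalibrated d h.
Proof.
  intros Hh Hg Hhg; split.
  - exact (line_asymptotically_calibrated d HM HG HN h Hh g Hg Hhg).
  - apply (line_asymptotically_calibrated d HM HG HN _ (one_lipschitz_opp d HM h Hh)
      (fun t => g (- t)) (unit_line_reverse d g Hg)).
    intros t; rewrite Hhg; ring.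
Qed.

Section ApproxAscent.
Context {X : Type} (d : X -> X -> R) (HM : is_metric d) (HG : geodesic_space d)
  (HN : nonneg_curv d) (h : X -> R) (Hh : forall x y, h x - h y <= d x y).

Definition approx_ascent x s eta p := exists y,
  2 * s <= h y - h x /\ d x y <= h y - h x + eta /\ d x p = s /\ d p y = d x y - s.

Lemma approx_ascent_dist x s eta p : approx_ascent x s eta p -> d x p = s.
Proof. now intros (y & _ & _ & Hxp & _). Qed.

Lemma approx_ascent_mono x s eta eta' p :
  eta <= eta' -> approx_ascent x s eta p -> approx_ascent x s eta' p.
Proof. intros He (y & Hy); exists y; lra. Qed.

Lemma approx_ascent_h_ge x s eta p : approx_ascent x s eta p -> h x + s - eta <= h p.
Proof.
  intros (y & _ & Hxy & _ & Hpy); specialize (Hh y p).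
  rewrite (dist_sym d HM), Hpy in Hh; lra.
Qed.

Lemma approx_ascent_backtrack x s eta p w :
  0 < s -> eta <= s -> approx_ascent x s eta p ->
  2 * s <= h x - h w -> d x w <= h x - h w + eta ->
  exists m, d w m + d m p = d w p /\ d m p = s /\ (d x m)^2 <= 8 * s * eta.
Proof.
  intros Hs Hes Hp Hw Hxw.
  pose proof (approx_ascent_h_ge _ _ _ _ Hp) as Hhp.
  destruct Hp as (y & Hy & Hxy & Hxp & Hpy).
  assert (h p - h w <= d p w) by apply Hh; rewrite (dist_sym d HM p w) in *.
  destruct (geodesic_point d HG w p (d w p - s)) as (m & Hwm & Hmp); [lra|].
  replace (d w p - (d w p - s)) with s in Hmp by ring.
  exists m; split; [lra | split; [exact Hmp|]].
  set (f := d x w - (h x - h w)); set (e := d x y - (h y - h x)).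
  assert (0 <= f) by (unfold f; specialize (Hh x w); lra).
  assert (h m <= h x + f).
  { pose proof (dist_triangle d HM w x p); specialize (Hh m w).
    rewrite (dist_sym d HM m w), (dist_sym d HM w x) in *; unfold f; lra. }
  (* m is almost as low as x, so comparison on the geodesic from y through p to x puts it near x. *)
  pose proof (comparison_near_end d HM HG HN y p x m s 0 (e + f)) as K.
  rewrite !(dist_sym d HM y), (dist_sym d HM p x), (dist_sym d HM m x) in K.
  assert (h y - h m <= d m y) by (rewrite (dist_sym d HM); apply Hh).
  specialize (K ltac:(lra) Hxp ltac:(lra) ltac:(lra) ltac:(unfold e, f in *; lra)).
  set (del := d x m) in *.
  assert (d x y * (2 * s * 0 + 0^2 + 2 * s * (e + f)) <= d x y * (4 * s * eta))
    by (apply Rmult_le_compat_l; [apply (dist_ge0 d HM) | unfold e, f in *; nra]).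
  assert (h y - h x <= d x y) by (rewrite (dist_sym d HM); apply Hh).
  assert (0 <= (d x y - 2 * s) * del^2) by (apply Rmult_le_pos; [lra | apply pow2_ge_0]).
  nra.
Qed.

Lemma approx_ascents_close x s eta p q w :
  0 < s -> eta <= s -> approx_ascent x s eta p -> approx_ascent x s eta q ->
  2 * s <= h x - h w -> d x w <= h x - h w + eta ->
  exists del, 0 <= del /\ del^2 <= 8 * s * eta /\
    (d p q)^2 <= 2 * (2 * s * del + del^2 + 4 * s * eta).
Proof.
  intros Hs Hes Hp Hq Hw Hxw.
  destruct (approx_ascent_backtrack x s eta p w Hs Hes Hp Hw Hxw) as (m & Hwmp & Hmp & Hdel).
  exists (d x m); split; [apply (dist_ge0 d HM) | split; [exact Hdel|]].
  pose proof (approx_ascent_h_ge _ _ _ _ Hp); pose proof (approx_ascent_h_ge _ _ _ _ Hq).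
  apply approx_ascent_dist in Hp, Hq.
  set (f := d x w - (h x - h w)).
  assert (0 <= f) by (unfold f; specialize (Hh x w); lra).
  assert (h p - h w <= d w p) by (rewrite (dist_sym d HM); apply Hh).
  assert (h q - h w <= d q w) by apply Hh.
  pose proof (dist_triangle d HM w x p); pose proof (dist_triangle d HM q x m).
  rewrite (dist_sym d HM w x), (dist_sym d HM q x) in *.
  pose proof (comparison_near_end d HM HG HN w m p q s (d x m) (eta + f)
    Hwmp Hmp (dist_ge0 d HM x m) ltac:(lra) ltac:(unfold f in *; lra)) as K.
  rewrite (dist_sym d HM q p) in K.
  set (Q := 2 * s * d x m + (d x m)^2 + 4 * s * eta) in *.
  assert (0 <= Q) by (unfold Q; pose proof (dist_ge0 d HM x m); nra).
  assert (d w p * (2 * s * d x m + (d x m)^2 + 2 * s * (eta + f)) <= d w p * Q)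
    by (apply Rmult_le_compat_l; unfold Q, f in *; nra).
  assert (0 <= (d w p - 2 * s) * (d p q)^2) by (apply Rmult_le_pos; [unfold f in *; lra | apply pow2_ge_0]).
  nra.
Qed.

Lemma approx_ascent_limit x s (eta : nat -> R) (u : nat -> X) l :
  (forall e, 0 < e -> exists N, forall k, (N <= k)%nat -> eta k <= e) ->
  (forall k, approx_ascent x s (eta k) (u k)) -> converges_to d u l ->
  d x l = s /\ h l = h x + s.
Proof.
  intros Heta Hu Hl.
  assert (Hxl : d x l = s) by (apply (converges_dist_const d HM u); auto; intro k; eapply approx_ascent_dist, Hu).
  split; [exact Hxl|].
  apply Rle_antisym; [specialize (Hh l x); rewrite (dist_sym d HM), Hxl in Hh; lra|].
  apply Rle_plus_epsilon; intros e He.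
  destruct (Hl (e / 2) ltac:(lra)) as [N1 HN1], (Heta (e / 2) ltac:(lra)) as [N2 HN2].
  specialize (HN1 _ (Nat.le_max_l N1 N2)); specialize (HN2 _ (Nat.le_max_r N1 N2)).
  pose proof (approx_ascent_h_ge _ _ _ _ (Hu (Nat.max N1 N2))); specialize (Hh (u (Nat.max N1 N2)) l).
  lra.
Qed.

End ApproxAscent.

Section Ascent.
Context {X : Type} (d : X -> X -> R) (HM : is_metric d) (HC : complete d)
  (HG : geodesic_space d) (HN : nonneg_curv d) (h : X -> R)
  (Hh : forall x y, h x - h y <= d x y) (Hcal : bicalibrated d h).

Lemma approx_ascent_exists x s eta :
  0 <= s -> 0 < eta -> exists p, approx_ascent d h x s eta p.
Proof.
  intros Hs Heta; destruct (proj1 Hcal x (2 * s) eta Heta) as (y & Hy & Hxy).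
  assert (h y - h x <= d x y) by (rewrite (dist_sym d HM); apply Hh).
  destruct (geodesic_point d HG x y s) as (p & Hxp & Hpy); [lra|].
  exists p, y; auto.
Qed.

Lemma approx_ascents_cauchy x s ep :
  0 < s -> 0 < ep -> exists eta, 0 < eta /\
    forall p q, approx_ascent d h x s eta p -> approx_ascent d h x s eta q -> d p q < ep.
Proof.
  intros Hs Hep.
  set (r := Rmin 1 (ep^2 / (8 * (2 * s + 1)))).
  assert (0 < r) by (apply Rmin_glb_lt; [lra | apply Rdiv_lt_0_compat; nra]).
  assert (r <= 1) by apply Rmin_l.
  assert (8 * (2 * s + 1) * r <= ep^2).
  { pose proof (Rmin_r 1 (ep^2 / (8 * (2 * s + 1)))).
    replace (ep^2) with (8 * (2 * s + 1) * (ep^2 / (8 * (2 * s + 1)))) by (field; lra).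
    apply Rmult_le_compat_l; [lra | assumption]. }
  set (eta := Rmin s (Rmin (r^2 / (8 * s)) (ep^2 / (32 * s)))).
  assert (0 < eta) by (repeat apply Rmin_glb_lt; try apply Rdiv_lt_0_compat; nra).
  assert (eta <= s) by apply Rmin_l.
  assert (8 * s * eta <= r^2 /\ 32 * s * eta <= ep^2) as [].
  { pose proof (Rmin_r s (Rmin (r^2 / (8 * s)) (ep^2 / (32 * s)))) as E.
    pose proof (Rmin_l (r^2 / (8 * s)) (ep^2 / (32 * s))).
    pose proof (Rmin_r (r^2 / (8 * s)) (ep^2 / (32 * s))).
    fold eta in E.
    replace (r^2) with (8 * s * (r^2 / (8 * s))) by (field; lra).
    replace (ep^2) with (32 * s * (ep^2 / (32 * s))) by (field; lra).
    split; apply Rmult_le_compat_l; lra. }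
  exists eta; split; [assumption|]; intros p q Hp Hq.
  destruct (proj2 Hcal x (2 * s) eta ltac:(assumption)) as (w & Hw & Hxw).
  destruct (approx_ascents_close d HM HG HN h Hh x s eta p q w Hs ltac:(assumption) Hp Hq
    ltac:(lra) ltac:(lra)) as (del & Hdel0 & Hdel & Hpq).
  assert (del <= r) by nra.
  assert ((d p q)^2 < ep^2) by nra.
  pose proof (dist_ge0 d HM p q); nra.
Qed.

Lemma ascent_exists x s : 0 <= s -> exists p, d x p = s /\ h p = h x + s.
Proof.
  intros Hs0; destruct (Req_dec s 0) as [->|Hs1].
  { exists x; rewrite (dist_refl d HM); split; [reflexivity | ring]. }
  assert (Hs : 0 < s) by lra.
  set (eta := fun k : nat => / (INR k + 1)).
  assert (Heta : forall k, 0 < eta k) by (intro k; apply Rinv_0_lt_compat; pose proof (pos_INR k); lra).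
  destruct (choice (fun k => approx_ascent d h x s (eta k))) as [u Hu].
  { intro k; apply approx_ascent_exists; auto. }
  assert (Hcauchy : cauchy_seq d u).
  { intros ep Hep; destruct (approx_ascents_cauchy x s ep Hs Hep) as (e & He & Hclose).
    destruct (inv_INR_succ_eventually_le e He) as [N HN']; exists N; intros m k Hm Hk.
    apply Hclose; [apply (approx_ascent_mono d h x s (eta m)) | apply (approx_ascent_mono d h x s (eta k))];
      try apply Hu; apply HN'; assumption. }
  destruct (HC u Hcauchy) as [l Hl].
  exists l; apply (approx_ascent_limit d HM h Hh x s eta u l); auto.
  intros e He; destruct (inv_INR_succ_eventually_le e He) as [N HN']; exists N; apply HN'.
Qed.

End Ascent.

Section AscentUniqueness.
Context {X : Type} (d : X -> X -> R) (HM : is_metric d) (HC : complete d)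
  (HG : geodesic_space d) (HN : nonneg_curv d) (h : X -> R)
  (Hh : forall x y, h x - h y <= d x y) (Hcal : bicalibrated d h).

Lemma descent_exists x s : 0 <= s -> exists p, d x p = s /\ h p = h x - s.
Proof.
  intros Hs.
  destruct (ascent_exists d HM HC HG HN _ (one_lipschitz_opp d HM h Hh)
    (bicalibrated_opp d h Hcal) x s Hs) as (p & Hxp & Hhp).
  exists p; split; [assumption | lra].
Qed.

Lemma ascent_unique x s p q :
  0 <= s -> d x p = s -> h p = h x + s -> d x q = s -> h q = h x + s -> p = q.
Proof.
  intros Hs Hxp Hhp Hxq Hhq.
  destruct (descent_exists x 1 ltac:(lra)) as (w & Hxw & Hhw).
  assert (Hwp : d w x + d x p = d w p).
  { apply Rle_antisym; [|apply (dist_triangle d HM)].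
    specialize (Hh p w); rewrite (dist_sym d HM p w) in Hh; rewrite (dist_sym d HM w x); lra. }
  (* x lies on a geodesic from w to p, and q is as close to x and as far from w as p is. *)
  assert (h q - h w <= d q w) by apply Hh.
  assert (d w x = 1) by (rewrite (dist_sym d HM); assumption).
  pose proof (comparison_near_end d HM HG HN w x p q s 0 0 Hwp Hxp ltac:(lra)) as K.
  rewrite (dist_sym d HM q x) in K; specialize (K ltac:(lra) ltac:(lra)).
  replace (d w p) with (1 + s) in K by lra.
  apply (dist_eq0 d HM); rewrite (dist_sym d HM).
  pose proof (dist_ge0 d HM q p); nra.
Qed.

Lemma ascent_dist x s t p q :
  0 <= s <= t -> d x p = s -> h p = h x + s -> d x q = t -> h q = h x + t ->
  d p q = t - s.
Proof.
  intros Hst Hxp Hhp Hxq Hhq.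
  destruct (ascent_exists d HM HC HG HN h Hh Hcal p (t - s) ltac:(lra)) as (r & Hpr & Hhr).
  enough (r = q) as <- by assumption.
  assert (d x r = t).
  { apply Rle_antisym; [pose proof (dist_triangle d HM x p r); lra|].
    specialize (Hh r x); rewrite (dist_sym d HM) in Hh; lra. }
  apply (ascent_unique x t); auto; lra.
Qed.

End AscentUniqueness.

Section GradientLines.
Context {X : Type} (d : X -> X -> R) (HM : is_metric d) (HC : complete d)
  (HG : geodesic_space d) (HN : nonneg_curv d) (h : X -> R)
  (Hh : forall x y, h x - h y <= d x y) (Hcal : bicalibrated d h).

Let Hh_opp := one_lipschitz_opp d HM h Hh.
Let Hcal_opp := bicalibrated_opp d h Hcal.

Lemma descent_unique x s p q :
  0 <= s -> d x p = s -> h p = h x - s -> d x q = s -> h q = h x - s -> p = q.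
Proof.
  intros; apply (ascent_unique d HM HC HG HN _ Hh_opp Hcal_opp x s); auto; lra.
Qed.

Lemma descent_dist x s t p q :
  0 <= s <= t -> d x p = s -> h p = h x - s -> d x q = t -> h q = h x - t ->
  d p q = t - s.
Proof.
  intros; apply (ascent_dist d HM HC HG HN _ Hh_opp Hcal_opp x); auto; lra.
Qed.

Lemma gradient_line_exists x : exists l, gradient_line d h x l.
Proof.
  destruct (choice (fun t p => d x p = Rabs t /\ h p = h x + t)) as [l Hl].
  { intro t; destruct (Rle_dec 0 t).
    - rewrite Rabs_pos_eq by lra; now apply (ascent_exists d HM HC HG HN h Hh Hcal).
    - destruct (descent_exists d HM HC HG HN h Hh Hcal x (- t)) as (p & Hxp & Hhp); [lra|].
      exists p; rewrite Rabs_left by lra; split; [assumption | lra]. }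
  assert (Hle : forall s t, s <= t -> d (l s) (l t) = t - s).
  { intros s t Hst; destruct (Hl s) as (Hs & Hhs), (Hl t) as (Ht & Hht).
    destruct (Rle_dec 0 s); [|destruct (Rle_dec t 0)].
    - rewrite Rabs_pos_eq in Hs, Ht by lra; apply (ascent_dist d HM HC HG HN h Hh Hcal x s t); auto; lra.
    - rewrite Rabs_left in Hs by lra; rewrite Rabs_left1 in Ht by lra.
      rewrite (dist_sym d HM); replace (t - s) with (- s - - t) by ring.
      apply (descent_dist x (- t) (- s)); auto; lra.
    - rewrite Rabs_left in Hs by lra; rewrite Rabs_pos_eq in Ht by lra.
      apply Rle_antisym.
      + pose proof (dist_triangle d HM (l s) x (l t)); pose proof (dist_sym d HM (l s) x); lra.
      + pose proof (Hh (l t) (l s)) as K; rewrite (dist_sym d HM) in K; lra. }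
  exists l; split; [|split].
  - symmetry; apply (dist_eq0 d HM); rewrite (proj1 (Hl 0)); apply Rabs_R0.
  - intros s t; destruct (Rle_dec s t).
    + rewrite Hle, Rabs_minus_sym, Rabs_pos_eq; lra.
    + rewrite (dist_sym d HM), Hle, Rabs_pos_eq; lra.
  - intro t; apply Hl.
Qed.

Lemma gradient_line_unique x l1 l2 :
  gradient_line d h x l1 -> gradient_line d h x l2 -> forall t, l1 t = l2 t.
Proof.
  intros (l10 & Hl1 & Hhl1) (l20 & Hl2 & Hhl2) t.
  assert (E1 : d x (l1 t) = Rabs t) by (rewrite <- l10, Hl1, Rabs_minus_sym; f_equal; ring).
  assert (E2 : d x (l2 t) = Rabs t) by (rewrite <- l20, Hl2, Rabs_minus_sym; f_equal; ring).
  destruct (Rle_dec 0 t).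
  - rewrite Rabs_pos_eq in E1, E2 by lra; apply (ascent_unique d HM HC HG HN h Hh Hcal x t); auto.
  - rewrite Rabs_left in E1, E2 by lra; apply (descent_unique x (- t)); auto; try lra.
    + rewrite Hhl1; ring.
    + rewrite Hhl2; ring.
Qed.

Lemma gradient_line_pythagoras x y l s :
  gradient_line d h x l -> (d y (l s))^2 = (d x y)^2 + 2 * s * (h x - h y) + s^2.
Proof.
  intros Hl; destruct (Rle_dec 0 s).
  - now apply (pythagoras_nonneg d HM HG HN h Hh).
  - pose proof (pythagoras_nonneg d HM HG HN _ Hh_opp x y _ (- s)
      (gradient_line_reverse d h x l Hl) ltac:(lra)) as K.
    cbv beta in K; rewrite Ropp_involutive in K; rewrite K; ring.
Qed.

Definition flow x : R -> X :=
  proj1_sig (constructive_indefinite_description _ (gradient_line_exists x)).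

Lemma flow_spec x : gradient_line d h x (flow x).
Proof. exact (proj2_sig (constructive_indefinite_description _ (gradient_line_exists x))). Qed.

Lemma h_flow x t : h (flow x t) = h x + t.
Proof. apply flow_spec. Qed.

Lemma flow_add x r t : flow (flow x r) t = flow x (r + t).
Proof.
  destruct (flow_spec x) as (_ & Hl & _).
  apply (gradient_line_unique (flow x r) _ (fun t => flow x (r + t)));
    [apply flow_spec | split; [|split]].
  - now rewrite Rplus_0_r.
  - now apply unit_line_shift.
  - intro t'; rewrite !h_flow; ring.
Qed.

Lemma flow_0 x : flow x 0 = x.
Proof. apply flow_spec. Qed.

Definition level_proj x := flow x (- h x).

Lemma h_level_proj x : h (level_proj x) = 0.
Proof. unfold level_proj; rewrite h_flow; ring. Qed.

Lemma flow_level_proj x : flow (level_proj x) (h x) = x.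
Proof. unfold level_proj; rewrite flow_add, Rplus_opp_l; apply flow_0. Qed.

Lemma level_proj_flow z t : h z = 0 -> level_proj (flow z t) = z.
Proof.
  intros Hz; unfold level_proj; rewrite h_flow, flow_add, Hz.
  replace (t + - (0 + t)) with 0 by ring; apply flow_0.
Qed.

Lemma dist_sq_level_split x y :
  (d x y)^2 = (d (level_proj x) (level_proj y))^2 + (h x - h y)^2.
Proof.
  pose proof (gradient_line_pythagoras _ y _ (h x) (flow_spec (level_proj x))) as Px.
  pose proof (gradient_line_pythagoras _ (level_proj x) _ (h y) (flow_spec (level_proj y))) as Py.
  rewrite flow_level_proj, (dist_sym d HM y x) in Px; rewrite flow_level_proj in Py.
  rewrite !h_level_proj in *; rewrite (dist_sym d HM (level_proj y)) in Py.
  rewrite Px, Py; ring.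
Qed.

Lemma level_set_splitting :
  exists (Z : Type) (dZ : Z -> Z -> R) (Phi : X -> Z * R),
    is_metric dZ /\
    (forall z t, exists w, Phi w = (z, t)) /\
    (forall x y, prod_dist dZ (Phi x) (Phi y) = d x y) /\
    (forall x, h x = snd (Phi x)).
Proof.
  exists {z | h z = 0}, (fun z w => d (proj1_sig z) (proj1_sig w)),
    (fun x => (exist _ (level_proj x) (h_level_proj x), h x)).
  split; [|split; [|split]].
  - apply (is_metric_sig d HM).
  - intros [z Hz] t; exists (flow z t); f_equal.
    + apply subset_eq_compat; now apply level_proj_flow.
    + rewrite h_flow, Hz; ring.
  - intros x y; unfold prod_dist; cbn [fst snd proj1_sig].
    rewrite <- dist_sq_level_split; apply sqrt_pow2, (dist_ge0 d HM).
  - reflexivity.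
Qed.

End GradientLines.

Theorem lemma4p1 (X : Type) (d : X -> X -> R) (n : nat) (f : X -> R) (L : R) :
  Alex_nonneg d n ->
  (exists K, lipschitz_with d f K) ->
  affine_fun d f ->
  opt_lipschitz d f L ->
  (exists g : R -> X, unit_line d g /\ 0 < L /\
     forall t, derivable_pt_lim (fun s => f (g s)) t L) ->
  exists (Z : Type) (dZ : Z -> Z -> R) (Phi : X -> Z * R),
    is_metric dZ /\
    (forall x y, exists w, Phi w = (x, y)) /\
    (forall x y, prod_dist dZ (Phi x) (Phi y) = d x y) /\
    (forall x, f x = L * snd (Phi x)).
Proof.
  intros (HM & HC & HG & HN & _) _ _ Hopt (g0 & Hg0 & HL & Hder).
  set (h := fun x => f x / L).
  assert (Hh : forall x y, h x - h y <= d x y).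
  { intros x y; pose proof (opt_lipschitz_lipschitz d HM f L Hopt x y).
    pose proof (Rle_abs (f x - f y)).
    apply (Rmult_le_reg_l L); [lra|]; unfold h; field_simplify; lra. }
  set (g := fun t => g0 (- f (g0 0) / L + t)).
  assert (Hhg : forall t, h (g t) = t).
  { intro t; unfold h, g; rewrite (constant_derivative_affine _ _ Hder); field; lra. }
  pose proof (line_bicalibrated d HM HG HN h g Hh (unit_line_shift d g0 _ Hg0) Hhg) as Hcal.
  destruct (level_set_splitting d HM HC HG HN h Hh Hcal) as (Z & dZ & Phi & HdZ & Hsurj & Hiso & HPhi).
  exists Z, dZ, Phi; split; [|split; [|split]]; auto.
  intro x; rewrite <- HPhi; unfold h; field; lra.
Qed.
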